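(* Let $\epsilon>0$ and let $\mathcal V=\{s_L(1+\epsilon)^\ell:0\le\ell\le k\}$. For every instance of problem MR there is a feasible schedule in which every task runs at a speed belonging to $\mathcal V$ and whose objective value $\sum_j w_jC_j$ is at most $(1+\epsilon)$ times the optimal objective value of the instance.
   Context: Problem MR. There are jobs $\mathcal J=\{1,\dots,n\}$ and processors $\mathcal P=\{1,\dots,m\}$. Job $j$ has weight $w_j>0$, release date $r_j\ge0$, and a nonempty set of Map tasks and a nonempty set of Reduce tasks, preassigned to processors with at most one task of each job per processor; $T_{i,j}$ is the task of job $j$ on processor $i$, with work $v_{i,j}\ge0$; $\mathcal T$ is the set of all tasks. A schedule gives each task a start time and a constant speed $s_{i,j}>0$; the task runs non-preemptively for $v_{i,j}/s_{i,j}$ time units and uses energy $v_{i,j}s_{i,j}^{\beta-1}$, where $\beta>1$ is a fixed constant. Feasibility: each processor runs at most one task at a time; tasks of job $j$ start no earlier than $r_j$; Reduce tasks of job $j$ start only after all Map tasks of job $j$ complete; total energy at most a given budget $E>0$. $C_j$ is the maximum completion time of the tasks of job $j$; the objective is to minimize $\sum_j w_jC_j$. Notation: $w_{\min},w_{\max}$ are the min/max weights, $r_{\max}=\max_j r_j$, $v_{\max}=\max v_{i,j}$, $v_{\min}=\min\{v_{i,j}:v_{i,j}>0\}$, $t_{\max}=\frac{w_{\max}}{w_{\min}}\big(nr_{\max}+n(n+1)(|\mathcal T|v_{\max}^\beta/E)^{1/(\beta-1)}\big)$, $s_L=v_{\min}/t_{\max}$, $s_U=(E/v_{\min})^{1/(\beta-1)}$,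 and $k=\lceil\log_{1+\epsilon}(s_U/s_L)\rceil$. *)

From HB Require Import structures.
From mathcomp Require Import all_boot all_order all_algebra.
From mathcomp Require Import all_classical all_reals all_analysis.
Set Implicit Arguments. Unset Strict Implicit. Unset Printing Implicit Defensive.
Import Order.TTheory GRing.Theory Num.Theory.
Local Open Scope ring_scope.

Inductive kind := MapTask | ReduceTask.

(* kd i j = None : job j has no task on processor i;
   kd i j = Some MapTask / Some ReduceTask : T_{i,j} is a Map / Reduce task.
   This encodes "at most one task of each job per processor". *)
Definition is_task (o : option kind) : bool := if o is Some _ then true else false.
Definition is_map (o : option kind) : bool :=
  if o is Some MapTask then true else false.
Definition is_red (o : option kind) : bool :=
  if o is Some ReduceTask then true else false.

Section MR.
Variables (R : realType) (n m : nat).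
Variables (w r : 'I_n -> R) (kd : 'I_m -> 'I_n -> option kind)
          (v : 'I_m -> 'I_n -> R).

Definition valid_instance : Prop :=
  [/\ forall j, 0 < w j,
      forall j, 0 <= r j,
      forall i j, is_task (kd i j) -> 0 <= v i j,
      forall j, exists i, is_map (kd i j)
    & forall j, exists i, is_red (kd i j)].

Definition completion (t s : 'I_m -> 'I_n -> R) i j : R := t i j + v i j / s i j.

Definition energy (beta : R) (s : 'I_m -> 'I_n -> R) : R :=
  \sum_(p : 'I_m * 'I_n | is_task (kd p.1 p.2)) v p.1 p.2 * s p.1 p.2 `^ (beta - 1).

Definition feasible (beta E : R) (t s : 'I_m -> 'I_n -> R) : Prop :=
  [/\
      forall i j, is_task (kd i j) -> 0 < s i j,
      forall i j j', j != j' -> is_task (kd i j) -> is_task (kd i j') ->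
        completion t s i j <= t i j' \/ completion t s i j' <= t i j,
      forall i j, is_task (kd i j) -> r j <= t i j,
      forall i i' j, is_map (kd i j) -> is_red (kd i' j) ->
        completion t s i j <= t i' j
    &
      energy beta s <= E].

(* C_j : maximum completion time of the tasks of job j (all are >= r_j >= 0
   in a feasible schedule, so 0 is a harmless neutral element). *)
Definition Cj (t s : 'I_m -> 'I_n -> R) (j : 'I_n) : R :=
  \big[Num.max/0]_(i < m | is_task (kd i j)) completion t s i j.

Definition objective (t s : 'I_m -> 'I_n -> R) : R :=
  \sum_(j < n) w j * Cj t s j.

Definition w_max : R := \big[Num.max/0]_(j < n) w j.
Definition w_min : R := \big[Num.min/w_max]_(j < n) w j.
Definition r_max : R := \big[Num.max/0]_(j < n) r j.
Definition v_max : R :=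
  \big[Num.max/0]_(p : 'I_m * 'I_n | is_task (kd p.1 p.2)) v p.1 p.2.
Definition v_min : R :=
  \big[Num.min/v_max]_(p : 'I_m * 'I_n | is_task (kd p.1 p.2) && (0 < v p.1 p.2))
     v p.1 p.2.
Definition num_tasks : R :=
  (#|[set p : 'I_m * 'I_n | is_task (kd p.1 p.2)]|)%:R.

Definition t_max (beta E : R) : R :=
  w_max / w_min *
  (n%:R * r_max +
   n%:R * (n.+1)%:R * (num_tasks * v_max `^ beta / E) `^ (beta - 1)^-1).

Definition s_L (beta E : R) : R := v_min / t_max beta E.
Definition s_U (beta E : R) : R := (E / v_min) `^ (beta - 1)^-1.

Definition k_steps (beta E eps : R) : int :=
  Num.ceil (ln (s_U beta E / s_L beta E) / ln (1 + eps)).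

Definition in_speed_set (beta E eps : R) (x : R) : Prop :=
  exists l : nat, (l%:Z <= k_steps beta E eps)%R /\
                  x = s_L beta E * (1 + eps) ^+ l.

End MR.

(* Rounding every speed of a feasible schedule down to the grid V and
   stretching all start times by [1 + eps] keeps the schedule feasible (less
   energy, durations grow by less than [1 + eps]) and costs at most a factor
   [1 + eps], provided every task of positive work runs at speed at least
   [s_L]; the energy budget alone keeps all such speeds below [s_U].  A
   schedule running such a task below [s_L] spends more than [t_max] on it, so
   its objective exceeds [w_min t_max], which an explicit reference schedule
   (one common speed, jobs processed in [2 n] consecutive slots) does not.
   Finally, grid schedules come in finitely many speed patterns, and for each
   of them the start times with bounded objective form a compact set, so an
   optimal grid schedule exists: it is within [1 + eps] of every schedule. *)

From HB Require Import structures.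
From mathcomp Require Import all_boot all_order all_algebra.
From mathcomp Require Import all_classical all_reals all_analysis.
From mathcomp Require Import ring zify.
Set Implicit Arguments. Unset Strict Implicit. Unset Printing Implicit Defensive.
Import Order.TTheory GRing.Theory Num.Theory.
Import numFieldNormedType.Exports.
Local Open Scope classical_set_scope.
Local Open Scope ring_scope.

Section TopologyFacts.
Variable T : topologicalType.

Lemma closure_subset_closed (A S : set T) : closed A -> S `<=` A -> closure S `<=` A.
Proof.
move=> clA SA p Sp; apply: clA => B nB; have [y [Sy By]] := Sp B nB.
by exists y; split => //; exact: SA.
Qed.

Lemma closed_const (P : Prop) : closed [set _ : T | P].
Proof.
have [HP|nP] := pselect P.
  by rewrite (_ : [set _ | P] = setT) ?predeqE //; exact: closedT.
by rewrite (_ : [set _ | P] = set0) ?predeqE //; exact: closed0.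
Qed.

Lemma closed_forall (I : Type) (Q : I -> T -> Prop) :
  (forall i, closed [set x | Q i x]) -> closed [set x | forall i, Q i x].
Proof. by move=> clQ p Sp i; apply: (closure_subset_closed (clQ i) _ Sp) => x /(_ i). Qed.

Lemma closed_implies (c : Prop) (Q : T -> Prop) :
  closed [set x | Q x] -> closed [set x | c -> Q x].
Proof. by move=> clQ; apply: (@closed_forall c (fun _ => Q)). Qed.

Lemma closed_or (A B : T -> Prop) :
  closed [set x | A x] -> closed [set x | B x] -> closed [set x | A x \/ B x].
Proof. exact: closedU. Qed.

Lemma closed_and5 (A B C D F : T -> Prop) :
  closed [set x | A x] -> closed [set x | B x] -> closed [set x | C x] ->
  closed [set x | D x] -> closed [set x | F x] ->
  closed [set x | [/\ A x, B x, C x, D x & F x]].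
Proof.
move=> clA clB clC clD clF p Sp; split.
- by apply: closure_subset_closed clA _ _ Sp => x [].
- by apply: closure_subset_closed clB _ _ Sp => x [].
- by apply: closure_subset_closed clC _ _ Sp => x [].
- by apply: closure_subset_closed clD _ _ Sp => x [].
- by apply: closure_subset_closed clF _ _ Sp => x [].
Qed.

Variable R : realType.

Lemma closed_le_continuous (f g : T -> R) : continuous f -> continuous g ->
  closed [set x | f x <= g x].
Proof.
move=> cf cg.
rewrite (_ : [set x | _] = (fun x => g x - f x) @^-1` [set y | 0 <= y]).
  apply: preimage_closed; last exact: closed_ge.
  by move=> x _; exact: (continuousB (cg x) (cf x)).
by rewrite predeqE => x /=; rewrite subr_ge0.
Qed.

Lemma continuous_sum (I : finType) (F : I -> T -> R) :
  (forall i, continuous (F i)) -> continuous (fun x => \sum_i F i x).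
Proof.
move=> cF; suff : forall s, continuous (fun x => \sum_(i <- s) F i x) by apply.
elim=> [|i s IH]; first by under eq_fun do rewrite big_nil; exact: cst_continuous.
by under eq_fun do rewrite big_cons; move=> x; apply: continuousD; [exact: cF | exact: IH].
Qed.

Lemma continuous_bigmax (I : finType) (P : pred I) (F : I -> T -> R) :
  (forall i, continuous (F i)) ->
  continuous (fun x => \big[Num.max/0]_(i | P i) F i x).
Proof.
move=> cF.
suff : forall s, continuous (fun x => \big[Num.max/0]_(i <- s | P i) F i x) by apply.
elim=> [|i s IH]; first by under eq_fun do rewrite big_nil; exact: cst_continuous.
have [Pi|nPi] := boolP (P i).
  by under eq_fun do rewrite big_cons Pi; exact: (max_fun_continuous (cF i) IH).
by under eq_fun do rewrite big_cons (negbTE nPi).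
Qed.

Lemma compact_family_EVT_min (I : finType) (S : I -> set T) (f : I -> T -> R) :
  (forall i, compact (S i)) -> (forall i, continuous (f i)) ->
  (exists i, S i !=set0) ->
  exists i0 c, S i0 c /\ forall i x, S i x -> f i0 c <= f i x.
Proof.
move=> cpS cf [i1 nSi1].
have minS i : exists c, S i !=set0 -> S i c /\ forall x, S i x -> f i c <= f i x.
  have [[x Sx]|nSi] := pselect (S i !=set0); last by case: nSi1 => x1 _; exists x1.
  have [c Sc cmin] := compact_EVT_min (ex_intro _ x Sx) (cpS i)
    (continuous_subspaceT (cf i)).
  by exists c => _; split => [|y Sy]; [rewrite -in_setE | apply: cmin; rewrite in_setE].
have [c cP] := choice minS.
have [i0 nSi0 i0min] := @arg_minP _ _ _ i1 (fun i => `[< S i !=set0 >])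
  (fun i => f i (c i)) (asboolT nSi1).
have [Sc0 c0min] := cP i0 (asboolW nSi0).
exists i0, (c i0); split => // i x Six.
have nSi : S i !=set0 by exists x.
exact: le_trans (i0min i (asboolT nSi)) ((cP i nSi).2 x Six).
Qed.

End TopologyFacts.

Lemma powRK (R : realType) (p x : R) : p != 0 -> 0 <= x -> (x `^ p) `^ p^-1 = x.
Proof. by move=> p0 x0; rewrite -powRrM mulfV ?powRr1. Qed.

Lemma le_sum_term (R : numDomainType) (I : finType) (P : pred I) (F : I -> R) i :
  (forall j, P j -> 0 <= F j) -> P i -> F i <= \sum_(j | P j) F j.
Proof.
move=> F0 Pi; rewrite (bigD1 i) //= lerDl.
by apply: sumr_ge0 => j /andP[Pj _]; exact: F0.
Qed.

Lemma expn_le_lnE (R : realType) (a z : R) (l : nat) : 1 < a -> 0 < z ->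
  (a ^+ l <= z) = (l%:R <= ln z / ln a).
Proof.
move=> a_gt1 z_gt0; have a_gt0 : 0 < a := lt_trans ltr01 a_gt1.
rewrite -ler_ln ?posrE ?exprn_gt0 // lnXn //.
by rewrite ler_pdivlMr ?ln_gt0 // mulr_natl.
Qed.

Lemma expn_lt_lnE (R : realType) (a z : R) (l : nat) : 1 < a -> 0 < z ->
  (z < a ^+ l) = (ln z / ln a < l%:R).
Proof.
move=> a_gt1 z_gt0; have a_gt0 : 0 < a := lt_trans ltr01 a_gt1.
rewrite -ltr_ln ?posrE ?exprn_gt0 // lnXn //.
by rewrite ltr_pdivrMr ?ln_gt0 // mulr_natl.
Qed.

Lemma div_le_scale (R : realFieldType) (a b b' c : R) :
  0 <= a -> 0 < b -> 0 < b' -> b <= c * b' -> a / b' <= c * (a / b).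
Proof.
move=> a_ge0 b_gt0 b'_gt0 b_le; rewrite ler_pdivrMr //.
rewrite (_ : c * (a / b) * b' = a * (c * b' / b)); last by ring.
by rewrite ler_peMr // ler_pdivlMr ?mul1r.
Qed.

Lemma sum_double_succ (k : nat) : (\sum_(j < k) (2 * j + 2))%N = (k * k.+1)%N.
Proof. by elim: k => [|k IH]; rewrite ?big_ord0 // big_ord_recr /= IH; lia. Qed.

Lemma continuous_coordD (R : realType) N (k : 'I_N) (c : R) :
  continuous (fun x : 'rV[R]_N => x ord0 k + c).
Proof. by move=> x; apply: continuousD; [exact: coord_continuous | exact: cst_continuous]. Qed.

Section MR.
Variables (R : realType) (n m : nat) (beta E eps : R).
Variables (w r : 'I_n -> R) (kd : 'I_m -> 'I_n -> option kind)
  (v : 'I_m -> 'I_n -> R).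
Hypotheses (beta_gt1 : 1 < beta) (E_gt0 : 0 < E) (eps_gt0 : 0 < eps)
  (valid : valid_instance w r kd v)
  (pos_task : exists i j, is_task (kd i j) /\ 0 < v i j).

Local Notation task i j := (is_task (kd i j)).
Local Notation sL := (s_L w r kd v beta E).
Local Notation sU := (s_U kd v beta E).
Local Notation tM := (t_max w r kd v beta E).
Local Notation kk := (k_steps w r kd v beta E eps).
Local Notation feas := (feasible r kd v beta E).
Local Notation obj := (objective w kd v).
Local Notation C := (Cj kd v).
Local Notation in_V := (in_speed_set w r kd v beta E eps).

Lemma w_gt0 j : 0 < w j. Proof. by case: valid. Qed.
Lemma r_ge0 j : 0 <= r j. Proof. by case: valid. Qed.
Lemma v_ge0 i j : task i j -> 0 <= v i j. Proof. by case: valid => _ _ + _ _; apply. Qed.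

Lemma n_gt0 : (0 < n)%N.
Proof. by case: pos_task => _ [j _]; exact: leq_ltn_trans (ltn_ord j). Qed.

Lemma le_w_max j : w j <= w_max w. Proof. exact: le_bigmax. Qed.
Lemma w_min_le j : w_min w <= w j. Proof. exact: bigmin_le. Qed.

Lemma w_min_gt0 : 0 < w_min w.
Proof.
apply: lt_bigmin => [|j _]; last exact: w_gt0.
exact: lt_le_trans (w_gt0 (Ordinal n_gt0)) (le_w_max _).
Qed.

Lemma w_min_le_w_max : w_min w <= w_max w.
Proof. exact: le_trans (w_min_le (Ordinal n_gt0)) (le_w_max _). Qed.

Lemma le_r_max j : r j <= r_max r. Proof. exact: le_bigmax. Qed.

Lemma r_max_ge0 : 0 <= r_max r.
Proof. exact: le_trans (r_ge0 (Ordinal n_gt0)) (le_r_max _). Qed.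

Lemma le_v_max i j : task i j -> v i j <= v_max kd v.
Proof. by move=> tij; exact: (le_bigmax_cond _ (fun p => v p.1 p.2) (j := (i, j))). Qed.

Lemma v_min_le i j : task i j -> 0 < v i j -> v_min kd v <= v i j.
Proof.
move=> tij vij; apply: (bigmin_le_cond _ (fun p => v p.1 p.2) (j := (i, j))).
by rewrite /= tij vij.
Qed.

Lemma v_max_gt0 : 0 < v_max kd v.
Proof. by case: pos_task => i [j [tij vij]]; exact: lt_le_trans vij (le_v_max tij). Qed.

Lemma v_min_gt0 : 0 < v_min kd v.
Proof. by apply: lt_bigmin => [|p /andP[]//]; exact: v_max_gt0. Qed.

Lemma v_min_le_v_max : v_min kd v <= v_max kd v.
Proof.
by case: pos_task => i [j [tij vij]]; exact: le_trans (v_min_le tij vij) (le_v_max tij).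
Qed.

Lemma num_tasks_ge1 : 1 <= num_tasks R kd.
Proof.
rewrite ler1n; apply/card_gt0P.
by case: pos_task => i [j [tij _]]; exists (i, j); rewrite inE.
Qed.

(* The time a task of work [v_max] needs at the uniform speed that spends
   exactly the budget [E] on all tasks. *)
Definition slot : R := (num_tasks R kd * v_max kd v `^ beta / E) `^ (beta - 1)^-1.

Lemma slot_gt0 : 0 < slot.
Proof.
apply/powR_gt0/divr_gt0/E_gt0/mulr_gt0; last exact/powR_gt0/v_max_gt0.
exact: lt_le_trans ltr01 num_tasks_ge1.
Qed.

Lemma slot_le_t_max : slot <= tM.
Proof.
have ratio_ge1 : 1 <= w_max w / w_min w.
  by rewrite ler_pdivlMr ?mul1r ?w_min_gt0 ?w_min_le_w_max.
have slot_le : slot <= n%:R * (n.+1)%:R * slot.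
  by rewrite ler_peMl ?(ltW slot_gt0) // -natrM ler1n muln_gt0 n_gt0.
rewrite /t_max -/slot -[leLHS]mul1r; apply: ler_pM => //; first exact: ltW slot_gt0.
apply: le_trans slot_le _; rewrite lerDr.
by rewrite mulr_ge0 ?ler0n ?r_max_ge0.
Qed.

Lemma t_max_gt0 : 0 < tM.
Proof. exact: lt_le_trans slot_gt0 slot_le_t_max. Qed.

Lemma s_L_gt0 : 0 < sL.
Proof. exact: divr_gt0 v_min_gt0 t_max_gt0. Qed.

Lemma Cj_ge0 t s j : 0 <= C t s j.
Proof. exact: bigmax_ge_id. Qed.

Lemma le_Cj t s i j : task i j -> completion v t s i j <= C t s j.
Proof. by move=> tij; exact: (le_bigmax_cond _ (fun i => completion v t s i j) tij). Qed.

Lemma objective_ge0 t s : 0 <= obj t s.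
Proof. by apply: sumr_ge0 => j _; rewrite mulr_ge0 ?Cj_ge0 ?(ltW (w_gt0 j)). Qed.

Lemma w_min_Cj_le_objective t s j : w_min w * C t s j <= obj t s.
Proof.
apply: le_trans (ler_wpM2r (Cj_ge0 t s j) (w_min_le j)) _.
apply: (le_sum_term (F := fun j => w j * C t s j)) => // k _.
by rewrite mulr_ge0 ?Cj_ge0 ?(ltW (w_gt0 k)).
Qed.

Lemma objective_le_scale t s t' s' c : 0 <= c ->
  (forall i j, task i j -> completion v t' s' i j <= c * completion v t s i j) ->
  obj t' s' <= c * obj t s.
Proof.
move=> c_ge0 le_comp; rewrite /objective mulr_sumr; apply: ler_sum => j _.
rewrite mulrCA ler_wpM2l ?(ltW (w_gt0 j)) //.
apply: bigmax_le => [|i tij]; first by rewrite mulr_ge0 ?Cj_ge0.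
exact: le_trans (le_comp i j tij) (ler_wpM2l c_ge0 (le_Cj t s tij)).
Qed.

Lemma le_energy s i j : (forall i j, task i j -> 0 < s i j) -> task i j ->
  v i j * s i j `^ (beta - 1) <= energy kd v beta s.
Proof.
move=> s_gt0 tij.
apply: (le_sum_term (P := fun p => task p.1 p.2)
  (F := fun p => v p.1 p.2 * s p.1 p.2 `^ (beta - 1)) (i := (i, j))) => // p tp.
by rewrite mulr_ge0 ?v_ge0 ?powR_ge0.
Qed.

Lemma speed_le_s_U s i j : (forall i j, task i j -> 0 < s i j) ->
  energy kd v beta s <= E -> task i j -> 0 < v i j -> s i j <= sU.
Proof.
move=> s_gt0 sE tij vij.
have beta1_neq0 : beta - 1 != 0 by rewrite subr_eq0 gt_eqF.
have pow_le : s i j `^ (beta - 1) <= E / v_min kd v.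
  rewrite ler_pdivlMr ?v_min_gt0 // mulrC.
  apply: le_trans (le_trans (le_energy s_gt0 tij) sE).
  by rewrite ler_wpM2r ?powR_ge0 ?v_min_le.
rewrite /s_U -[leLHS](powRK beta1_neq0 (ltW (s_gt0 i j tij))).
apply: ge0_ler_powR => //; first by rewrite invr_ge0 subr_ge0 ltW.
  by rewrite nnegrE powR_ge0.
by rewrite nnegrE divr_ge0 ?(ltW E_gt0) ?(ltW v_min_gt0).
Qed.

Definition level (x : R) : nat := Num.trunc (ln (x / sL) / ln (1 + eps)).

Section Level.
Variable x : R.
Hypothesis sL_le_x : sL <= x.

Let eps1_gt1 : 1 < 1 + eps. Proof. by rewrite ltrDl. Qed.
Let ratio_gt0 : 0 < x / sL.
Proof. by rewrite divr_gt0 ?s_L_gt0 // (lt_le_trans s_L_gt0). Qed.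
Let log_ratio_ge0 : 0 <= ln (x / sL) / ln (1 + eps).
Proof.
apply: divr_ge0; last exact/ltW/ln_gt0.
by apply: ln_ge0; rewrite ler_pdivlMr ?s_L_gt0 ?mul1r.
Qed.

Lemma level_speed_le : sL * (1 + eps) ^+ level x <= x.
Proof.
rewrite mulrC -ler_pdivlMr ?s_L_gt0 // expn_le_lnE //.
by rewrite truncn_le.
Qed.

Lemma lt_level_speed : x < sL * (1 + eps) ^+ (level x).+1.
Proof.
rewrite mulrC -ltr_pdivrMr ?s_L_gt0 // expn_lt_lnE //.
exact: truncnS_gt.
Qed.

Lemma level_le_k_steps : x <= sU -> ((level x)%:Z <= kk)%R.
Proof.
move=> x_le_sU.
have pow_le : (1 + eps) ^+ level x <= sU / sL.
  rewrite ler_pdivlMr ?s_L_gt0 // mulrC.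
  exact: le_trans level_speed_le x_le_sU.
have : ((level x)%:Z)%:~R <= ln (sU / sL) / ln (1 + eps).
  by rewrite -expn_le_lnE // (lt_le_trans _ pow_le) ?exprn_gt0 // (lt_trans ltr01).
by move/le_ceil; rewrite intrKceil.
Qed.

End Level.

(* Work-free tasks take no time and no energy; they run at the lowest grid speed. *)
Definition rounded_speed (s : 'I_m -> 'I_n -> R) i j : R :=
  sL * (1 + eps) ^+ (if 0 < v i j then level (s i j) else 0).

Definition scaled_start (t : 'I_m -> 'I_n -> R) i j : R := (1 + eps) * t i j.

Section Rounding.
Variables t s : 'I_m -> 'I_n -> R.
Hypotheses (ts_feas : feas t s) (s_ge_sL : forall i j, task i j -> 0 < v i j -> sL <= s i j).

Let s_gt0 i j : task i j -> 0 < s i j. Proof. by case: ts_feas => + _ _ _ _; apply. Qed.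
Let s_le_sU i j : task i j -> 0 < v i j -> s i j <= sU.
Proof. by case: ts_feas => _ _ _ _ sE; exact: speed_le_s_U. Qed.
Let eps1_gt0 : 0 < 1 + eps. Proof. by rewrite addr_gt0. Qed.

Lemma rounded_speed_gt0 i j : 0 < rounded_speed s i j.
Proof. by rewrite mulr_gt0 ?s_L_gt0 ?exprn_gt0. Qed.

Lemma rounded_speed_le i j : task i j -> 0 < v i j -> rounded_speed s i j <= s i j.
Proof. by move=> tij vij; rewrite /rounded_speed vij level_speed_le ?s_ge_sL. Qed.

Lemma rounded_speed_in_V i j : task i j -> in_V (rounded_speed s i j).
Proof.
have k_ge0 : (0 <= kk)%R.
  have [i0 [j0 [tij0 vij0]]] := pos_task.
  exact: le_trans (level_le_k_steps (s_ge_sL tij0 vij0) (s_le_sU tij0 vij0)).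
move=> tij; rewrite /in_speed_set /rounded_speed.
case: ifP => vij; (eexists; split; last reflexivity).
- exact: level_le_k_steps (s_ge_sL tij vij) (s_le_sU tij vij).
- exact: k_ge0.
Qed.

Lemma rounded_completion_le i j : task i j ->
  completion v (scaled_start t) (rounded_speed s) i j <= (1 + eps) * completion v t s i j.
Proof.
move=> tij; rewrite /completion mulrDr lerD2l.
have /orP[/eqP->|vij] : (v i j == 0) || (0 < v i j) by rewrite -le0r v_ge0.
  by rewrite !mul0r mulr0.
apply: div_le_scale (v_ge0 tij) (s_gt0 tij) (rounded_speed_gt0 i j) _.
by rewrite mulrC /rounded_speed vij -mulrA -exprSr ltW ?lt_level_speed ?s_ge_sL.
Qed.

Lemma rounded_energy_le : energy kd v beta (rounded_speed s) <= energy kd v beta s.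
Proof.
apply: ler_sum => p tp.
have /orP[/eqP->|vp] : (v p.1 p.2 == 0) || (0 < v p.1 p.2) by rewrite -le0r v_ge0.
  by rewrite !mul0r.
rewrite ler_wpM2l ?v_ge0 //; apply: ge0_ler_powR.
- by rewrite subr_ge0 ltW.
- by rewrite nnegrE ltW ?rounded_speed_gt0.
- by rewrite nnegrE ltW ?s_gt0.
- exact: rounded_speed_le tp vp.
Qed.

Lemma feasible_rounded : feas (scaled_start t) (rounded_speed s).
Proof.
case: ts_feas => _ disj rel prec sE.
split.
- by move=> i j _; exact: rounded_speed_gt0.
- move=> i j j' jj' tij tij'.
  case: (disj i j j' jj' tij tij') => before; [left | right].
    by apply: le_trans (rounded_completion_le tij) _; rewrite /scaled_start ler_pM2l.
  by apply: le_trans (rounded_completion_le tij') _; rewrite /scaled_start ler_pM2l.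
- move=> i j tij; apply: le_trans (rel i j tij) _.
  apply: ler_peMl; first exact: le_trans (r_ge0 j) (rel i j tij).
  by rewrite lerDl ltW.
- move=> i i' j mij rij'.
  have tij : task i j by case: (kd i j) mij.
  apply: le_trans (rounded_completion_le tij) _.
  by rewrite /scaled_start ler_pM2l ?prec.
- exact: le_trans rounded_energy_le sE.
Qed.

Lemma objective_rounded_le :
  obj (scaled_start t) (rounded_speed s) <= (1 + eps) * obj t s.
Proof. by apply: objective_le_scale; [exact: ltW | move=> i j; exact: rounded_completion_le]. Qed.

End Rounding.

Section Reference.

Definition ref_speed : R := v_max kd v / slot.

(* Slot [k] is the interval [ref_time k, ref_time k.+1]; job [j] runs its Map
   tasks in slot [2 j] and its Reduce tasks in slot [2 j + 1]. *)
Definition ref_time (k : nat) : R := r_max r + k%:R * slot.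

Definition ref_start (i : 'I_m) (j : 'I_n) : R := ref_time (2 * j + is_red (kd i j)).

Local Notation ref_speeds := (fun _ _ => ref_speed).

Lemma ref_speed_gt0 : 0 < ref_speed.
Proof. exact: divr_gt0 v_max_gt0 slot_gt0. Qed.

Lemma ref_time_le a b : (a <= b)%N -> ref_time a <= ref_time b.
Proof. by move=> ab; rewrite lerD2l ler_wpM2r ?ler_nat ?(ltW slot_gt0). Qed.

Lemma ref_completion_le i j : task i j ->
  completion v ref_start ref_speeds i j <= ref_time (2 * j + is_red (kd i j)).+1.
Proof.
move=> tij; rewrite /completion /ref_start /ref_time -addrA lerD2l.
rewrite -natr1 mulrDl mul1r lerD2l /ref_speed invf_div mulrA ler_pdivrMr ?v_max_gt0 //.
by rewrite mulrC; apply: ler_wpM2l; [exact: ltW slot_gt0 | exact: le_v_max].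
Qed.

Lemma ref_energy_le : energy kd v beta ref_speeds <= E.
Proof.
have beta1_neq0 : beta - 1 != 0 by rewrite subr_eq0 gt_eqF.
have slot_pow : slot `^ (beta - 1) = num_tasks R kd * v_max kd v `^ beta / E.
  rewrite /slot -powRrM mulVf ?powRr1 //.
  by rewrite divr_ge0 ?(ltW E_gt0) ?mulr_ge0 ?powR_ge0 ?(le_trans ler01 num_tasks_ge1).
have speed_slot : ref_speed `^ (beta - 1) * slot `^ (beta - 1) = v_max kd v `^ (beta - 1).
  by rewrite -powRM ?(ltW ref_speed_gt0) ?(ltW slot_gt0) // divfK ?gt_eqF ?slot_gt0.
apply: le_trans (_ : \sum_(p | task p.1 p.2) v_max kd v * ref_speed `^ (beta - 1) <= _).
  by apply: ler_sum => p tp; rewrite ler_wpM2r ?powR_ge0 ?le_v_max.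
rewrite sumr_const -mulr_natl.
have -> : #|[pred p : 'I_m * 'I_n | task p.1 p.2]|%:R = num_tasks R kd.
  by rewrite /num_tasks cardsE.
suff -> : num_tasks R kd * (v_max kd v * ref_speed `^ (beta - 1)) = E by [].
apply: (mulIf (x := slot `^ (beta - 1))); first exact/lt0r_neq0/powR_gt0/slot_gt0.
rewrite -!mulrA speed_slot mulr_powRB1 ?(ltW v_max_gt0) ?(lt_trans ltr01) //.
by rewrite slot_pow mulrCA divff ?mulr1 ?gt_eqF.
Qed.

Lemma feasible_ref : feas ref_start ref_speeds.
Proof.
split.
- by move=> i j _; exact: ref_speed_gt0.
- move=> i j j' jj' tij tij'.
  have [jltj'|j'ltj|/val_inj eqj] := ltngtP j j'; last by rewrite eqj eqxx in jj'.
    left; apply: le_trans (ref_completion_le tij) (ref_time_le _).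
    by case: (is_red _); case: (is_red _); lia.
  right; apply: le_trans (ref_completion_le tij') (ref_time_le _).
  by case: (is_red _); case: (is_red _); lia.
- move=> i j _; apply: le_trans (le_r_max j) _.
  by rewrite lerDl mulr_ge0 ?ler0n ?(ltW slot_gt0).
- move=> i i' j mij rij'.
  have tij : task i j by case: (kd i j) mij.
  apply: le_trans (ref_completion_le tij) (ref_time_le _).
  by move: mij rij'; case: (kd i j) => [[]|]; case: (kd i' j) => [[]|] //=; lia.
- exact: ref_energy_le.
Qed.

Lemma s_L_le_ref_speed : sL <= ref_speed.
Proof.
apply: le_trans (_ : v_max kd v / tM <= _).
  by rewrite ler_wpM2r ?invr_ge0 ?(ltW t_max_gt0) ?v_min_le_v_max.
by rewrite ler_wpM2l ?(ltW v_max_gt0) // lef_pV2 ?posrE ?slot_gt0 ?t_max_gt0 ?slot_le_t_max.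
Qed.

Lemma objective_ref_le : obj ref_start ref_speeds <= w_min w * tM.
Proof.
have C_le j : C ref_start ref_speeds j <= ref_time (2 * j + 2).
  apply: bigmax_le => [|i tij].
    by rewrite addr_ge0 ?r_max_ge0 ?mulr_ge0 ?ler0n ?(ltW slot_gt0).
  by apply: le_trans (ref_completion_le tij) (ref_time_le _); case: (is_red _); lia.
apply: le_trans (_ : \sum_(j < n) w_max w * ref_time (2 * j + 2) <= _).
  apply: ler_sum => j _; apply: le_trans (ler_wpM2l (ltW (w_gt0 j)) (C_le j)) _.
  by rewrite ler_wpM2r ?le_w_max // addr_ge0 ?r_max_ge0 ?mulr_ge0 ?ler0n ?(ltW slot_gt0).
rewrite -mulr_sumr big_split /= sumr_const card_ord -mulr_suml -natr_sum sum_double_succ.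
rewrite /t_max -/slot mulrA [w_min w * _]mulrC divfK ?gt_eqF ?w_min_gt0 //.
by rewrite natrM -[r_max r *+ n]mulr_natl.
Qed.

End Reference.

Lemma slow_objective_gt t s i j : feas t s -> task i j -> 0 < v i j ->
  s i j < sL -> w_min w * tM < obj t s.
Proof.
case=> s_gt0 _ rel _ _ tij vij slow.
have tM_lt : tM < v i j / s i j.
  rewrite ltr_pdivlMr ?s_gt0 //; apply: lt_le_trans (v_min_le tij vij).
  rewrite (_ : v_min kd v = tM * sL) ?ltr_pM2l ?t_max_gt0 //.
  by rewrite /s_L mulrC divfK // gt_eqF ?t_max_gt0.
have tM_lt_C : tM < C t s j.
  apply: lt_le_trans tM_lt (le_trans _ (le_Cj t s tij)); rewrite /completion lerDr.
  exact: le_trans (r_ge0 j) (rel i j tij).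
apply: lt_le_trans (w_min_Cj_le_objective t s j).
by rewrite ltr_pM2l ?w_min_gt0.
Qed.

Lemma feasible_eq_on_tasks t s t' s' :
  (forall i j, task i j -> t i j = t' i j /\ s i j = s' i j) -> feas t s -> feas t' s'.
Proof.
move=> eq_ts [s_gt0 disj rel prec sE].
have eq_comp i j : task i j -> completion v t s i j = completion v t' s' i j.
  by move=> tij; rewrite /completion; case: (eq_ts i j tij) => -> ->.
split.
- by move=> i j tij; case: (eq_ts i j tij) => _ <-; exact: s_gt0.
- move=> i j j' jj' tij tij'; rewrite -(eq_comp i j tij) -(eq_comp i j' tij').
  by rewrite -(eq_ts i j tij).1 -(eq_ts i j' tij').1; exact: disj.
- by move=> i j tij; rewrite -(eq_ts i j tij).1; exact: rel.
- move=> i i' j mij rij'.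
  have tij : task i j by case: (kd i j) mij.
  have tij' : task i' j by case: (kd i' j) rij'.
  by rewrite -(eq_comp i j tij) -(eq_ts i' j tij').1; exact: prec.
- suff -> : energy kd v beta s' = energy kd v beta s by [].
  by apply: eq_bigr => p tp; case: (eq_ts _ _ tp) => _ ->.
Qed.

Lemma objective_eq_on_tasks t s t' s' :
  (forall i j, task i j -> t i j = t' i j /\ s i j = s' i j) -> obj t s = obj t' s'.
Proof.
move=> eq_ts; apply: eq_bigr => j _; congr (_ * _); apply: eq_bigr => i tij.
by rewrite /completion; case: (eq_ts i j tij) => -> ->.
Qed.

Lemma start_le_objective t s i j : feas t s -> task i j ->
  w_min w * t i j <= obj t s.
Proof.
case=> s_gt0 _ _ _ _ tij; apply: le_trans (w_min_Cj_le_objective t s j).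
rewrite ler_wpM2l ?(ltW w_min_gt0) //; apply: le_trans (le_Cj t s tij).
by rewrite /completion lerDl divr_ge0 ?v_ge0 ?(ltW (s_gt0 i j tij)).
Qed.

(* Start times are coded as a row vector, the space where boxes are compact;
   [starts_vec] puts the irrelevant entries of non-tasks to [0]. *)
Definition start_of (x : 'rV[R]_(m * n)) i j : R := x ord0 (mxvec_index i j).

Definition starts_vec (t : 'I_m -> 'I_n -> R) : 'rV[R]_(m * n) :=
  mxvec (\matrix_(i, j) (if task i j then t i j else 0)).

Lemma start_of_starts_vec t i j :
  start_of (starts_vec t) i j = if task i j then t i j else 0.
Proof. by rewrite /start_of /starts_vec mxvecE mxE. Qed.

Lemma continuous_completion_start_of s i j :
  continuous (fun x : 'rV[R]_(m * n) => completion v (start_of x) s i j).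
Proof.
by rewrite /completion /start_of; exact: continuous_coordD.
Qed.

Lemma closed_feasible_starts s : closed [set x | feas (start_of x) s].
Proof.
apply: closed_and5; first exact: closed_const.
- do 3![apply: closed_forall => ?]; do 3!apply: closed_implies.
  by apply: closed_or; (apply: closed_le_continuous;
    [exact: continuous_completion_start_of | exact: coord_continuous]).
- do 2![apply: closed_forall => ?]; apply: closed_implies.
  by apply: closed_le_continuous; [exact: cst_continuous | exact: coord_continuous].
- do 3![apply: closed_forall => ?]; do 2!apply: closed_implies.
  by apply: closed_le_continuous;
    [exact: continuous_completion_start_of | exact: coord_continuous].
- exact: closed_const.
Qed.

Lemma continuous_objective_start_of s : continuous (fun x => obj (start_of x) s).
Proof.
apply: continuous_sum => j x; apply: continuousM; first exact: cst_continuous.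
apply: continuous_bigmax => i; exact: continuous_completion_start_of.
Qed.

Local Notation V_speeds s := (forall i j, task i j -> in_V (s i j)).

Local Notation grid := {ffun 'I_m * 'I_n -> 'I_(absz kk).+1}.

Definition grid_speed (F : grid) i j : R :=
  sL * (1 + eps) ^+ F (i, j).

Lemma grid_speed_in_V F i j : (0 <= kk)%R -> in_V (grid_speed F i j).
Proof.
move=> k_ge0; exists (F (i, j)); split => //.
have := ltn_ord (F (i, j)); move: (nat_of_ord _) => l.
by rewrite ltnS -lez_nat gez0_abs.
Qed.

Lemma V_speeds_on_grid s : V_speeds s ->
  exists F, forall i j, task i j -> s i j = grid_speed F i j.
Proof.
move=> Vs.
have level_of (p : 'I_m * 'I_n) : exists l : 'I_(absz kk).+1,
    task p.1 p.2 -> s p.1 p.2 = sL * (1 + eps) ^+ l.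
  have [tp|_] := boolP (task p.1 p.2); last by exists ord0.
  have [l [l_le ->]] := Vs _ _ tp.
  have l_lt : (l < (absz kk).+1)%N.
    by rewrite ltnS -lez_nat (le_trans l_le) // ler_norm.
  by exists (Ordinal l_lt).
have [f fP] := choice level_of.
by exists (finfun f) => i j tij; rewrite /grid_speed ffunE (fP (i, j)).
Qed.

Definition grid_schedules (B : R) (F : grid) : set 'rV[R]_(m * n) :=
  [set x : 'rV[R]_(m * n) | (forall k, 0 <= x ord0 k /\ x ord0 k <= B) /\ feas (start_of x) (grid_speed F)].

Lemma compact_grid_schedules B F : compact (grid_schedules B F).
Proof.
have box_closed : closed [set x : 'rV[R]_(m * n) | forall k, 0 <= x ord0 k /\ x ord0 k <= B].
  apply: closed_forall => k; apply: closedI.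
    by apply: closed_le_continuous; [exact: cst_continuous | exact: coord_continuous].
  by apply: closed_le_continuous; [exact: coord_continuous | exact: cst_continuous].
have : closed (grid_schedules B F).
  exact (closedI box_closed (closed_feasible_starts (s := grid_speed F))).
move/subclosed_compact; apply.
  by apply: (rV_compact (A := fun=> `[0, B]%classic)) => k; exact: segment_compact.
by move=> x [box _] k /=; rewrite in_itv /= (box k).1 (box k).2.
Qed.

Lemma grid_schedule_of B t s : feas t s -> V_speeds s -> obj t s <= w_min w * B ->
  exists F x, grid_schedules B F x /\ obj (start_of x) (grid_speed F) = obj t s.
Proof.
move=> ts_feas Vs obj_le; have [F Fs] := V_speeds_on_grid Vs.
have eq_ts i j : task i j -> t i j = start_of (starts_vec t) i j /\ s i j = grid_speed F i j.
  by move=> tij; rewrite start_of_starts_vec tij Fs.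
exists F, (starts_vec t); split; last exact/esym/objective_eq_on_tasks.
split; last exact: feasible_eq_on_tasks ts_feas.
have B_ge0 : 0 <= B.
  by rewrite -(pmulr_rge0 _ w_min_gt0) (le_trans (objective_ge0 t s)).
move=> k; case/mxvec_indexP: k => i j; rewrite -[_ (mxvec_index i j)]/(start_of _ i j).
rewrite start_of_starts_vec; case: ifP => tij //; split.
  by case: ts_feas => _ _ rel _ _; exact: le_trans (r_ge0 j) (rel i j tij).
rewrite -(ler_pM2l w_min_gt0); exact: le_trans (start_le_objective ts_feas tij) obj_le.
Qed.

Lemma V_schedule_min : (exists t s, feas t s /\ V_speeds s) ->
  exists t s, (feas t s /\ V_speeds s) /\
    forall t' s', feas t' s' -> V_speeds s' -> obj t s <= obj t' s'.
Proof.
move=> [t0 [s0 [ts0_feas Vs0]]].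
have k_ge0 : (0 <= kk)%R.
  have [i [j [tij _]]] := pos_task; have [l [l_le _]] := Vs0 i j tij.
  exact: le_trans l_le.
pose B := obj t0 s0 / w_min w.
have objB : w_min w * B = obj t0 s0 by rewrite mulrC divfK ?gt_eqF ?w_min_gt0.
have [F0 [x0 [Sx0 obj_x0]]] : exists F0 x0, grid_schedules B F0 x0 /\
    obj (start_of x0) (grid_speed F0) = obj t0 s0.
  by apply: grid_schedule_of => //; rewrite objB.
have [F [x [Sx xmin]]] := compact_family_EVT_min
  (f := fun F x => obj (start_of x) (grid_speed F)) (@compact_grid_schedules B)
  (fun F => @continuous_objective_start_of (grid_speed F)) (ex_intro _ F0 (ex_intro _ x0 Sx0)).
exists (start_of x), (grid_speed F); split.
  by split; [exact: Sx.2 | move=> i j _; exact: grid_speed_in_V].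
move=> t s ts_feas Vs; have [obj_le|obj_gt] := lerP (obj t s) (w_min w * B).
  by have [F' [x' [Sx' <-]]] := grid_schedule_of ts_feas Vs obj_le; exact: xmin.
by apply: le_trans (xmin F0 x0 Sx0) _; rewrite obj_x0 -objB ltW.
Qed.

Theorem near_optimal_V_schedule : exists t s, [/\ feas t s, V_speeds s &
  forall t' s', feas t' s' -> obj t s <= (1 + eps) * obj t' s'].
Proof.
have ref_fast i j : task i j -> 0 < v i j -> sL <= ref_speed := fun _ _ => s_L_le_ref_speed.
have [t [s [[ts_feas Vs] ts_min]]] := V_schedule_min (ex_intro _ _ (ex_intro _ _
  (conj (feasible_rounded feasible_ref ref_fast) (rounded_speed_in_V feasible_ref ref_fast)))).
exists t, s; split => // t' s' ts'_feas.
have [[i [j [tij [vij slow]]]]|] := pselect (exists i j, [/\ task i j, 0 < v i j & s' i j < sL]).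
  apply: le_trans (ts_min _ _ (feasible_rounded feasible_ref ref_fast)
    (rounded_speed_in_V feasible_ref ref_fast)) _.
  apply: le_trans (objective_rounded_le feasible_ref ref_fast) _.
  rewrite ler_wpM2l ?addr_ge0 ?(ltW eps_gt0) //.
  exact: le_trans objective_ref_le (ltW (slow_objective_gt ts'_feas tij vij slow)).
move=> no_slow; have fast i j : task i j -> 0 < v i j -> sL <= s' i j.
  by move=> tij vij; rewrite leNgt; apply/negP => slow; apply: no_slow; exists i, j.
apply: le_trans (objective_rounded_le ts'_feas fast).
exact: ts_min (feasible_rounded ts'_feas fast) (rounded_speed_in_V ts'_feas fast).
Qed.

End MR.

Theorem lemma1 (R : realType) (n m : nat) (beta E eps : R)
  (w r : 'I_n -> R) (kd : 'I_m -> 'I_n -> option kind) (v : 'I_m -> 'I_n -> R) :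
  1 < beta -> 0 < E -> 0 < eps ->
  valid_instance w r kd v ->
  (exists (i : 'I_m) (j : 'I_n), is_task (kd i j) /\ 0 < v i j) ->
  exists t s : 'I_m -> 'I_n -> R,
    [/\ feasible r kd v beta E t s,
        (forall i j, is_task (kd i j) -> in_speed_set w r kd v beta E eps (s i j))
      & forall t' s' : 'I_m -> 'I_n -> R, feasible r kd v beta E t' s' ->
          objective w kd v t s <= (1 + eps) * objective w kd v t' s'].
Proof. exact: near_optimal_V_schedule. Qed.
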